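(* Let $\mathcal T$ be a theory of $\mathsf{LGI}$ consisting of graded implications and let $\zeta\Rightarrow_e\eta$ be a graded implication. If $\mathcal T\models\zeta\Rightarrow_e\eta$, then $\mathcal T\vdash_{\mathsf{LGI}}\zeta\Rightarrow_t\eta$ for every $t\in[0,1]$ with $t<e$.
   Context: Fix a continuous t-norm $\odot$ on $[0,1]$ and let $c\oplus d = 1-((1-c)\odot(1-d))$. Write $c\odot_{\L} d=\max(c+d-1,0)$, $c\oplus_{\L} d=\min(c+d,1)$. Syntax of $\mathsf{LGI}$: countably many variables $\phi_0,\phi_1,\dots$ and constants $\bot,\top$. Basic expressions are built from variables and constants by binary $\land,\lor,\odot$ and unary $\sim$. A graded implication is written $\alpha\Rightarrow_c\beta$ with $\alpha,\beta$ basic expressions, $c\in[0,1]$. Formulas are built from graded implications by classical $\land,\lor,\lnot$; $\Phi\to\Psi$ abbreviates $\lnot\Phi\lor\Psi$. A theory is a set of formulas. Semantics: an evaluation is a map $v$ from basic expressions to $[0,1]$ with $v(\bot)=0$, $v(\top)=1$, interpreting $\land$ by min, $\lor$ by max, $\odot$ by the t-norm $\odot$, and $\sim$ by $x\mapsto 1-x$. $v$ satisfies $\alpha\Rightarrow_c\beta$ iff $v(\alpha)\le v(\beta)+1-c$; satisfaction extends classically to all formulas. $\mathcal T\models\Phi$ means every evaluation satisfying all elements of $\mathcal T$ satisfies $\Phi$. Calculus $\mathsf{LGI}$: axioms are (i) all substitution instances (by graded implications) of classical propositional tautologies; (ii) for all basic expressions $\alpha,\beta,\gamma$ and $c,d\in[0,1]$: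 ($\land_1$) $(\alpha\Rightarrow_d\beta)\land(\alpha\Rightarrow_d\gamma)\to(\alpha\Rightarrow_d\beta\land\gamma)$; ($\land_2$) $\alpha\land\beta\Rightarrow_1\alpha$; ($\land_3$) $\alpha\land\beta\Rightarrow_1\beta$; ($\lor_1$) $(\alpha\Rightarrow_d\gamma)\land(\beta\Rightarrow_d\gamma)\to(\alpha\lor\beta\Rightarrow_d\gamma)$; ($\lor_2$) $\alpha\Rightarrow_1\alpha\lor\beta$; ($\lor_3$) $\beta\Rightarrow_1\alpha\lor\beta$; ($\odot_1$) $(\top\Rightarrow_c\alpha)\land(\top\Rightarrow_d\beta)\to(\top\Rightarrow_{c\odot d}\alpha\odot\beta)$; ($\odot_2$) $(\alpha\Rightarrow_c\bot)\land(\beta\Rightarrow_d\bot)\to(\alpha\odot\beta\Rightarrow_{c\oplus d}\bot)$; ($\odot_3$) $\top\Rightarrow_1\top\odot\top$; ($\sim_1$) $(\alpha\Rightarrow_d\beta)\to(\sim\beta\Rightarrow_d\sim\alpha)$; ($\sim_2$) $\sim\sim\alpha\Rightarrow_1\alpha$; ($\sim_3$) $\alpha\Rightarrow_1\sim\sim\alpha$; ($\top$) $\alpha\Rightarrow_1\top$; ($\bot$) $\bot\Rightarrow_1\alpha$; (0) $\alpha\Rightarrow_0\beta$; ($c$) $\alpha\Rightarrow_c\alpha$; (inkons) $\lnot(\top\Rightarrow_c\bot)$ for $c>0$; (trans$_1$) $(\alpha\Rightarrow_c\beta)\land(\beta\Rightarrow_d\gamma)\to(\alpha\Rightarrow_{c\odot_{\L}d}\gamma)$;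 (trans$_2$) $(\alpha\Rightarrow_c\bot)\land(\top\Rightarrow_d\beta)\to(\alpha\Rightarrow_{c\oplus_{\L}d}\beta)$; (lin$_1$) $(\alpha\Rightarrow_1\beta)\lor(\beta\Rightarrow_1\alpha)$; (lin$_2$) $(\top\Rightarrow_d\alpha)\lor(\alpha\Rightarrow_{1-d}\bot)$. The only rule is modus ponens. $\mathcal T\vdash_{\mathsf{LGI}}\Phi$ means $\Phi$ has a finite derivation from axioms and elements of $\mathcal T$ by modus ponens. *)

From Stdlib Require Import Reals.
Open Scope R_scope.

(** * Continuous t-norms on [0,1] (represented as functions R -> R -> R,
      only their behaviour on [0,1] matters). *)
Definition unit_int (x : R) : Prop := 0 <= x <= 1.

Record is_cont_tnorm (tn : R -> R -> R) : Prop := {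
  tn_closed : forall x y, unit_int x -> unit_int y -> unit_int (tn x y);
  tn_comm : forall x y, unit_int x -> unit_int y -> tn x y = tn y x;
  tn_assoc : forall x y z, unit_int x -> unit_int y -> unit_int z ->
               tn x (tn y z) = tn (tn x y) z;
  tn_mono : forall x y z, unit_int x -> unit_int y -> unit_int z ->
               x <= y -> tn x z <= tn y z;
  tn_unit : forall x, unit_int x -> tn x 1 = x;
  tn_cont : forall x y, unit_int x -> unit_int y ->
     forall eps, eps > 0 -> exists delta, delta > 0 /\
       forall x' y', unit_int x' -> unit_int y' ->
         Rabs (x' - x) < delta -> Rabs (y' - y) < delta ->
         Rabs (tn x' y' - tn x y) < eps
}.

Definition tconorm (tn : R -> R -> R) (c d : R) : R := 1 - tn (1 - c) (1 - d).

Definition luk_t (c d : R) : R := Rmax (c + d - 1) 0.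
Definition luk_s (c d : R) : R := Rmin (c + d) 1.

Inductive bexpr : Type :=
| BVar : nat -> bexpr
| BBot : bexpr
| BTop : bexpr
| BAnd : bexpr -> bexpr -> bexpr
| BOr  : bexpr -> bexpr -> bexpr
| BTn  : bexpr -> bexpr -> bexpr
| BNeg : bexpr -> bexpr.

(** formulas: classical combinations of graded implications [GI a c b]
    standing for  a =>_c b  *)
Inductive formula : Type :=
| GI   : bexpr -> R -> bexpr -> formula
| FAnd : formula -> formula -> formula
| FOr  : formula -> formula -> formula
| FNot : formula -> formula.

Definition FImp (P Q : formula) : formula := FOr (FNot P) Q.

Fixpoint wf (P : formula) : Prop :=
  match P with
  | GI _ c _ => unit_int c
  | FAnd P Q | FOr P Q => wf P /\ wf Q
  | FNot P => wf P
  end.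

Definition is_eval (tn : R -> R -> R) (v : bexpr -> R) : Prop :=
  (forall a, unit_int (v a)) /\
  v BBot = 0 /\ v BTop = 1 /\
  (forall a b, v (BAnd a b) = Rmin (v a) (v b)) /\
  (forall a b, v (BOr a b) = Rmax (v a) (v b)) /\
  (forall a b, v (BTn a b) = tn (v a) (v b)) /\
  (forall a, v (BNeg a) = 1 - v a).

Fixpoint sat (v : bexpr -> R) (P : formula) : Prop :=
  match P with
  | GI a c b => v a <= v b + 1 - c
  | FAnd P Q => sat v P /\ sat v Q
  | FOr P Q => sat v P \/ sat v Q
  | FNot P => ~ sat v P
  end.

Definition models (tn : R -> R -> R) (T : formula -> Prop) (P : formula) : Prop :=
  forall v, is_eval tn v -> (forall Q, T Q -> sat v Q) -> sat v P.

(** Boolean evaluation treating graded implications as propositional atoms;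
    a formula is a substitution instance of a classical tautology iff it is
    true under every such atom valuation. *)
Fixpoint beval (f : bexpr -> R -> bexpr -> bool) (P : formula) : bool :=
  match P with
  | GI a c b => f a c b
  | FAnd P Q => andb (beval f P) (beval f Q)
  | FOr P Q => orb (beval f P) (beval f Q)
  | FNot P => negb (beval f P)
  end.

Definition taut_instance (P : formula) : Prop :=
  wf P /\ forall f, beval f P = true.

Inductive LGI_axiom (tn : R -> R -> R) : formula -> Prop :=
| ax_taut : forall P, taut_instance P -> LGI_axiom tn P
| ax_and1 : forall a b g d, unit_int d ->
    LGI_axiom tn (FImp (FAnd (GI a d b) (GI a d g)) (GI a d (BAnd b g)))
| ax_and2 : forall a b, LGI_axiom tn (GI (BAnd a b) 1 a)
| ax_and3 : forall a b, LGI_axiom tn (GI (BAnd a b) 1 b)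
| ax_or1 : forall a b g d, unit_int d ->
    LGI_axiom tn (FImp (FAnd (GI a d g) (GI b d g)) (GI (BOr a b) d g))
| ax_or2 : forall a b, LGI_axiom tn (GI a 1 (BOr a b))
| ax_or3 : forall a b, LGI_axiom tn (GI b 1 (BOr a b))
| ax_tn1 : forall a b c d, unit_int c -> unit_int d ->
    LGI_axiom tn (FImp (FAnd (GI BTop c a) (GI BTop d b)) (GI BTop (tn c d) (BTn a b)))
| ax_tn2 : forall a b c d, unit_int c -> unit_int d ->
    LGI_axiom tn (FImp (FAnd (GI a c BBot) (GI b d BBot)) (GI (BTn a b) (tconorm tn c d) BBot))
| ax_tn3 : LGI_axiom tn (GI BTop 1 (BTn BTop BTop))
| ax_neg1 : forall a b d, unit_int d ->
    LGI_axiom tn (FImp (GI a d b) (GI (BNeg b) d (BNeg a)))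
| ax_neg2 : forall a, LGI_axiom tn (GI (BNeg (BNeg a)) 1 a)
| ax_neg3 : forall a, LGI_axiom tn (GI a 1 (BNeg (BNeg a)))
| ax_top : forall a, LGI_axiom tn (GI a 1 BTop)
| ax_bot : forall a, LGI_axiom tn (GI BBot 1 a)
| ax_zero : forall a b, LGI_axiom tn (GI a 0 b)
| ax_refl : forall a c, unit_int c -> LGI_axiom tn (GI a c a)
| ax_inkons : forall c, unit_int c -> c > 0 -> LGI_axiom tn (FNot (GI BTop c BBot))
| ax_trans1 : forall a b g c d, unit_int c -> unit_int d ->
    LGI_axiom tn (FImp (FAnd (GI a c b) (GI b d g)) (GI a (luk_t c d) g))
| ax_trans2 : forall a b c d, unit_int c -> unit_int d ->
    LGI_axiom tn (FImp (FAnd (GI a c BBot) (GI BTop d b)) (GI a (luk_s c d) b))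
| ax_lin1 : forall a b, LGI_axiom tn (FOr (GI a 1 b) (GI b 1 a))
| ax_lin2 : forall a d, unit_int d ->
    LGI_axiom tn (FOr (GI BTop d a) (GI a (1 - d) BBot)).

Inductive LGI_prf (tn : R -> R -> R) (T : formula -> Prop) : formula -> Prop :=
| prf_ax : forall P, LGI_axiom tn P -> LGI_prf tn T P
| prf_hyp : forall P, T P -> LGI_prf tn T P
| prf_mp : forall P Q, LGI_prf tn T P -> LGI_prf tn T (FImp P Q) -> LGI_prf tn T Q.

(* Lindenbaum–Henkin argument.  If [T] together with [~ (zeta =>_t eta)] is
   consistent, extend it to a consistent theory deciding every atom
   [top =>_r phi_i] with [r] rational, and let [v(phi_i)] be the supremum of
   the derivable grades [r].  By induction on basic expressions (using the
   continuity of the t-norm at the [⊙] step), every value [v(alpha)] is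
   approximated from below by derivable [top =>_c alpha] and from above by
   derivable [alpha =>_(1-c) bot].  These approximations make [v] a model of
   [T], hence of [zeta =>_e eta]; conversely they derive [zeta =>_t eta] from
   [v], paying with the slack [e - t]. *)

From Stdlib Require Import Reals Lra Lia List Classical ClassicalEpsilon Cantor ZArith.
Open Scope R_scope.

Ltac grade_arith :=
  unfold luk_t, luk_s, tconorm in *; unfold Rmax, Rmin, unit_int in *;
  repeat destruct Rle_dec; lra.

(* Needs the well-formedness of the atoms among the hypotheses. *)
Ltac prove_tautology :=
  apply prf_ax, ax_taut; split;
  [ unfold FImp; simpl; repeat split; try tauto; unfold unit_int in *; lra
  | intro f; unfold FImp; simpl;
    repeat match goal with |- context [beval ?g ?X] => destruct (beval g X) end;
    repeat match goal with |- context [?g ?a ?c ?b] =>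
      match type of g with (bexpr -> R -> bexpr -> bool) => destruct (g a c b) end end;
    reflexivity ].

Lemma grade_density a b : 0 <= a -> a < b -> exists k m, a < INR k / INR (S m) < b.
Proof.
  intros Ha Hab.
  destruct (INR_archimed (b - a) 1) as [m Hm]; [lra|].
  assert (HN : INR (S m) = INR m + 1) by apply S_INR.
  assert (Hm0 := pos_INR m).
  set (N := INR (S m)) in *.
  destruct (archimed (a * N)) as [Hup1 Hup2].
  exists (Z.to_nat (up (a * N))), m.
  rewrite INR_IZR_INZ, Z2Nat.id by (apply le_IZR; nra).
  assert (Hk : a * N < IZR (up (a * N)) < b * N) by nra.
  split; apply Rmult_lt_reg_r with N; try lra;
    unfold Rdiv; rewrite Rmult_assoc, Rinv_l; lra.
Qed.

Section TNorm.

Variable tn : R -> R -> R.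
Hypothesis Htn : is_cont_tnorm tn.

Lemma tn_lower_perturb x y c : unit_int x -> unit_int y -> c < tn x y ->
  exists d, 0 < d /\ c < tn (Rmax (x - d) 0) (Rmax (y - d) 0).
Proof.
  intros Hx Hy Hc.
  destruct (tn_cont _ Htn x y Hx Hy (tn x y - c)) as [d [Hd Hcont]]; [lra|].
  exists (d / 2); split; [lra|].
  assert (H : Rabs (tn (Rmax (x - d / 2) 0) (Rmax (y - d / 2) 0) - tn x y) < tn x y - c)
    by (apply Hcont; try apply Rabs_def1; grade_arith).
  apply Rabs_def2 in H; lra.
Qed.

Lemma tn_upper_perturb x y c : unit_int x -> unit_int y -> tn x y < c ->
  exists d, 0 < d /\ tn (Rmin (x + d) 1) (Rmin (y + d) 1) < c.
Proof.
  intros Hx Hy Hc.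
  destruct (tn_cont _ Htn x y Hx Hy (c - tn x y)) as [d [Hd Hcont]]; [lra|].
  exists (d / 2); split; [lra|].
  assert (H : Rabs (tn (Rmin (x + d / 2) 1) (Rmin (y + d / 2) 1) - tn x y) < c - tn x y)
    by (apply Hcont; try apply Rabs_def1; grade_arith).
  apply Rabs_def2 in H; lra.
Qed.

End TNorm.

Section LGI.

Variable tn : R -> R -> R.
Hypothesis Htn : is_cont_tnorm tn.

Definition falsum : formula := GI BTop 1 BBot.

Definition consistent (G : formula -> Prop) : Prop := ~ LGI_prf tn G falsum.

Lemma axiom_wf P : LGI_axiom tn P -> wf P.
Proof.
  destruct 1; unfold FImp, unit_int in *; simpl; unfold unit_int;
    try (destruct H; assumption); repeat split; try lra.
  all: try (apply (tn_closed _ Htn); unfold unit_int; lra).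
  all: try (pose proof (tn_closed _ Htn (1 - c) (1 - d)); grade_arith).
  all: grade_arith.
Qed.

Lemma prf_wf G (HG : forall P, G P -> wf P) P : LGI_prf tn G P -> wf P.
Proof.
  induction 1 as [P HA|P HP|P Q _ _ _ IH]; auto using axiom_wf.
  unfold FImp in IH; simpl in IH; tauto.
Qed.

Lemma prf_mono (G G' : formula -> Prop) (HGG' : forall P, G P -> G' P) P :
  LGI_prf tn G P -> LGI_prf tn G' P.
Proof.
  induction 1 as [P HA|P HP|P Q _ IH1 _ IH2].
  - now apply prf_ax.
  - now apply prf_hyp, HGG'.
  - exact (prf_mp _ _ _ _ IH1 IH2).
Qed.

Section Derivations.

Variable G : formula -> Prop.
Hypothesis HG : forall P, G P -> wf P.

Lemma prf_grade a c b : LGI_prf tn G (GI a c b) -> unit_int c.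
Proof. exact (prf_wf G HG (GI a c b)). Qed.

Lemma prf_mp2 X Y Z :
  LGI_prf tn G X -> LGI_prf tn G Y -> LGI_prf tn G (FImp (FAnd X Y) Z) -> LGI_prf tn G Z.
Proof.
  intros HX HY HXYZ.
  pose proof (prf_wf G HG _ HX); pose proof (prf_wf G HG _ HY).
  assert (Hpair : LGI_prf tn G (FImp X (FImp Y (FAnd X Y)))) by prove_tautology.
  exact (prf_mp _ _ _ _ (prf_mp _ _ _ _ HY (prf_mp _ _ _ _ HX Hpair)) HXYZ).
Qed.

Lemma prf_or_elim A B : LGI_prf tn G (FOr A B) -> LGI_prf tn G (FNot A) -> LGI_prf tn G B.
Proof.
  intros HAB HnA. pose proof (prf_wf G HG _ HAB) as [HA HB].
  assert (Hsyl : LGI_prf tn G (FImp (FOr A B) (FImp (FNot A) B))) by prove_tautology.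
  exact (prf_mp _ _ _ _ HnA (prf_mp _ _ _ _ HAB Hsyl)).
Qed.

Lemma prf_falsum_of_contra X : LGI_prf tn G X -> LGI_prf tn G (FNot X) -> LGI_prf tn G falsum.
Proof.
  intros HX HnX. pose proof (prf_wf G HG _ HX).
  assert (Hex : LGI_prf tn G (FImp X (FImp (FNot X) falsum))) by (unfold falsum; prove_tautology).
  exact (prf_mp _ _ _ _ HnX (prf_mp _ _ _ _ HX Hex)).
Qed.

Lemma prf_falsum_of_top_bot c : LGI_prf tn G (GI BTop c BBot) -> 0 < c -> LGI_prf tn G falsum.
Proof.
  intros H Hc. apply (prf_falsum_of_contra _ H).
  apply prf_ax, ax_inkons; [exact (prf_grade _ _ _ H) | exact Hc].
Qed.

Lemma prf_trans a b g c d :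
  LGI_prf tn G (GI a c b) -> LGI_prf tn G (GI b d g) -> LGI_prf tn G (GI a (luk_t c d) g).
Proof.
  intros H1 H2. apply (prf_mp2 _ _ _ H1 H2).
  apply prf_ax, ax_trans1; eapply prf_grade; eassumption.
Qed.

Lemma prf_weaken a b c t :
  LGI_prf tn G (GI a c b) -> 0 <= t -> t <= c -> LGI_prf tn G (GI a t b).
Proof.
  intros H Ht Htc. pose proof (prf_grade _ _ _ H).
  assert (Hrefl : LGI_prf tn G (GI b (1 - c + t) b)) by (apply prf_ax, ax_refl; grade_arith).
  replace t with (luk_t c (1 - c + t)) by grade_arith.
  exact (prf_trans _ _ _ _ _ H Hrefl).
Qed.

Lemma prf_contra a b d : LGI_prf tn G (GI a d b) -> LGI_prf tn G (GI (BNeg b) d (BNeg a)).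
Proof.
  intro H. apply (prf_mp _ _ _ _ H), prf_ax, ax_neg1. exact (prf_grade _ _ _ H).
Qed.

Lemma prf_top_neg_bot : LGI_prf tn G (GI BTop 1 (BNeg BBot)).
Proof.
  pose proof (prf_contra _ _ _ (prf_ax tn G _ (ax_bot tn (BNeg BTop)))) as H.
  pose proof (prf_trans _ _ _ _ _ (prf_ax tn G _ (ax_neg3 tn BTop)) H) as H'.
  apply (prf_weaken _ _ _ _ H'); grade_arith.
Qed.

Lemma prf_neg_top_bot : LGI_prf tn G (GI (BNeg BTop) 1 BBot).
Proof.
  pose proof (prf_contra _ _ _ (prf_ax tn G _ (ax_top tn (BNeg BBot)))) as H.
  pose proof (prf_trans _ _ _ _ _ H (prf_ax tn G _ (ax_neg2 tn BBot))) as H'.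
  apply (prf_weaken _ _ _ _ H'); grade_arith.
Qed.

(* [top =>_c a] says "the value of [a] is at least [c]" and [a =>_(1-c) bot]
   says "it is at most [c]"; [Rmax _ 0] keeps the grades in [0,1]. *)
Definition lower_approx (a : bexpr) (x : R) : Prop :=
  forall c, c < x -> LGI_prf tn G (GI BTop (Rmax c 0) a).

Definition upper_approx (a : bexpr) (x : R) : Prop :=
  forall c, x < c -> LGI_prf tn G (GI a (Rmax (1 - c) 0) BBot).

Lemma lower_approx_bot : lower_approx BBot 0.
Proof.
  intros c Hc. apply (prf_weaken _ _ _ _ (prf_ax tn G _ (ax_zero tn BTop BBot))); grade_arith.
Qed.

Lemma upper_approx_bot : upper_approx BBot 0.
Proof.
  intros c Hc.
  apply (prf_weaken _ _ _ _ (prf_ax tn G _ (ax_refl tn BBot 1 ltac:(grade_arith)))); grade_arith.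
Qed.

Lemma lower_approx_top : lower_approx BTop 1.
Proof.
  intros c Hc.
  apply (prf_weaken _ _ _ _ (prf_ax tn G _ (ax_refl tn BTop 1 ltac:(grade_arith)))); grade_arith.
Qed.

Lemma upper_approx_top : upper_approx BTop 1.
Proof.
  intros c Hc. apply (prf_weaken _ _ _ _ (prf_ax tn G _ (ax_zero tn BTop BBot))); grade_arith.
Qed.

Lemma lower_approx_and a b x y :
  lower_approx a x -> lower_approx b y -> lower_approx (BAnd a b) (Rmin x y).
Proof.
  intros La Lb c Hc.
  pose proof (La c ltac:(grade_arith)) as Ha. pose proof (Lb c ltac:(grade_arith)) as Hb.
  apply (prf_mp2 _ _ _ Ha Hb), prf_ax, ax_and1. exact (prf_grade _ _ _ Ha).
Qed.

Lemma upper_approx_and a b x y :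
  upper_approx a x -> upper_approx b y -> upper_approx (BAnd a b) (Rmin x y).
Proof.
  intros Ua Ub c Hc. unfold Rmin in Hc; destruct Rle_dec.
  - pose proof (prf_trans _ _ _ _ _ (prf_ax tn G _ (ax_and2 tn a b)) (Ua c Hc)) as H.
    apply (prf_weaken _ _ _ _ H); grade_arith.
  - pose proof (prf_trans _ _ _ _ _ (prf_ax tn G _ (ax_and3 tn a b)) (Ub c Hc)) as H.
    apply (prf_weaken _ _ _ _ H); grade_arith.
Qed.

Lemma lower_approx_or a b x y :
  lower_approx a x -> lower_approx b y -> lower_approx (BOr a b) (Rmax x y).
Proof.
  intros La Lb c Hc. unfold Rmax in Hc; destruct Rle_dec.
  - pose proof (prf_trans _ _ _ _ _ (Lb c Hc) (prf_ax tn G _ (ax_or3 tn a b))) as H.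
    apply (prf_weaken _ _ _ _ H); grade_arith.
  - pose proof (prf_trans _ _ _ _ _ (La c Hc) (prf_ax tn G _ (ax_or2 tn a b))) as H.
    apply (prf_weaken _ _ _ _ H); grade_arith.
Qed.

Lemma upper_approx_or a b x y :
  upper_approx a x -> upper_approx b y -> upper_approx (BOr a b) (Rmax x y).
Proof.
  intros Ua Ub c Hc.
  pose proof (Ua c ltac:(grade_arith)) as Ha. pose proof (Ub c ltac:(grade_arith)) as Hb.
  apply (prf_mp2 _ _ _ Ha Hb), prf_ax, ax_or1. exact (prf_grade _ _ _ Ha).
Qed.

Lemma lower_approx_tn a b x y : unit_int x -> unit_int y ->
  lower_approx a x -> lower_approx b y -> lower_approx (BTn a b) (tn x y).
Proof.
  intros Hx Hy La Lb c Hc.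
  destruct (tn_lower_perturb tn Htn x y c Hx Hy Hc) as [d [Hd Hcd]].
  pose proof (La (x - d) ltac:(lra)) as Ha. pose proof (Lb (y - d) ltac:(lra)) as Hb.
  pose proof (prf_grade _ _ _ Ha) as ga. pose proof (prf_grade _ _ _ Hb) as gb.
  pose proof (prf_mp2 _ _ _ Ha Hb (prf_ax tn G _ (ax_tn1 tn a b _ _ ga gb))) as H.
  pose proof (tn_closed _ Htn _ _ ga gb).
  apply (prf_weaken _ _ _ _ H); grade_arith.
Qed.

Lemma upper_approx_tn a b x y : unit_int x -> unit_int y ->
  upper_approx a x -> upper_approx b y -> upper_approx (BTn a b) (tn x y).
Proof.
  intros Hx Hy Ua Ub c Hc.
  destruct (tn_upper_perturb tn Htn x y c Hx Hy Hc) as [d [Hd Hcd]].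
  pose proof (Ua (x + d) ltac:(lra)) as Ha. pose proof (Ub (y + d) ltac:(lra)) as Hb.
  pose proof (prf_grade _ _ _ Ha) as ga. pose proof (prf_grade _ _ _ Hb) as gb.
  pose proof (prf_mp2 _ _ _ Ha Hb (prf_ax tn G _ (ax_tn2 tn a b _ _ ga gb))) as H.
  unfold tconorm in H.
  replace (1 - Rmax (1 - (x + d)) 0) with (Rmin (x + d) 1) in H by grade_arith.
  replace (1 - Rmax (1 - (y + d)) 0) with (Rmin (y + d) 1) in H by grade_arith.
  pose proof (tn_closed _ Htn (Rmin (x + d) 1) (Rmin (y + d) 1) ltac:(grade_arith) ltac:(grade_arith)).
  apply (prf_weaken _ _ _ _ H); grade_arith.
Qed.

Lemma lower_approx_neg a x : upper_approx a x -> lower_approx (BNeg a) (1 - x).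
Proof.
  intros Ua c Hc.
  pose proof (prf_trans _ _ _ _ _ prf_top_neg_bot (prf_contra _ _ _ (Ua (1 - c) ltac:(lra)))) as H.
  apply (prf_weaken _ _ _ _ H); grade_arith.
Qed.

Lemma upper_approx_neg a x : lower_approx a x -> upper_approx (BNeg a) (1 - x).
Proof.
  intros La c Hc.
  pose proof (prf_trans _ _ _ _ _ (prf_contra _ _ _ (La (1 - c) ltac:(lra))) prf_neg_top_bot) as H.
  apply (prf_weaken _ _ _ _ H); grade_arith.
Qed.

Lemma approx_le a c b x y : consistent G ->
  lower_approx a x -> upper_approx b y -> LGI_prf tn G (GI a c b) -> x <= y + 1 - c.
Proof.
  intros Hcons La Ub Hab. apply Rnot_lt_le; intro Hlt. apply Hcons.
  set (D := x - (y + 1 - c)).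
  pose proof (La (x - D / 4) ltac:(unfold D; lra)) as Ha.
  pose proof (Ub (y + D / 4) ltac:(unfold D; lra)) as Hb.
  pose proof (prf_grade _ _ _ Hab).
  apply (prf_falsum_of_top_bot _ (prf_trans _ _ _ _ _ (prf_trans _ _ _ _ _ Ha Hab) Hb)).
  unfold D in *; grade_arith.
Qed.

Lemma prf_of_approx_lt a t b x y : unit_int t ->
  upper_approx a x -> lower_approx b y -> x < y + 1 - t -> LGI_prf tn G (GI a t b).
Proof.
  intros Ht Ua Lb Hlt.
  set (eps := (y + 1 - t - x) / 4).
  pose proof (Ua (x + eps) ltac:(unfold eps; lra)) as Ha.
  pose proof (Lb (y - eps) ltac:(unfold eps; lra)) as Hb.
  pose proof (prf_grade _ _ _ Ha) as ga. pose proof (prf_grade _ _ _ Hb) as gb.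
  pose proof (prf_mp2 _ _ _ Ha Hb (prf_ax tn G _ (ax_trans2 tn a b _ _ ga gb))) as H.
  apply (prf_weaken _ _ _ _ H); unfold eps in *; grade_arith.
Qed.

Fixpoint ev (val : nat -> R) (a : bexpr) : R :=
  match a with
  | BVar i => val i
  | BBot => 0
  | BTop => 1
  | BAnd a b => Rmin (ev val a) (ev val b)
  | BOr a b => Rmax (ev val a) (ev val b)
  | BTn a b => tn (ev val a) (ev val b)
  | BNeg a => 1 - ev val a
  end.

Lemma ev_unit val (Hval : forall i, unit_int (val i)) a : unit_int (ev val a).
Proof.
  induction a; simpl; auto; try grade_arith.
  apply (tn_closed _ Htn); auto.
Qed.

Lemma ev_is_eval val : (forall i, unit_int (val i)) -> is_eval tn (ev val).
Proof. intro Hval; repeat split; intros; try reflexivity; apply ev_unit; auto. Qed.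

Lemma approx_ev val (Hval : forall i, unit_int (val i))
  (Lvar : forall i, lower_approx (BVar i) (val i))
  (Uvar : forall i, upper_approx (BVar i) (val i)) a :
  lower_approx a (ev val a) /\ upper_approx a (ev val a).
Proof.
  pose proof (ev_unit val Hval) as EU.
  induction a as [i| | |a [La Ua] b [Lb Ub]|a [La Ua] b [Lb Ub]|a [La Ua] b [Lb Ub]|a [La Ua]];
    simpl.
  - auto.
  - split; [apply lower_approx_bot | apply upper_approx_bot].
  - split; [apply lower_approx_top | apply upper_approx_top].
  - split; [apply lower_approx_and | apply upper_approx_and]; auto.
  - split; [apply lower_approx_or | apply upper_approx_or]; auto.
  - split; [apply lower_approx_tn | apply upper_approx_tn]; auto.
  - split; [apply lower_approx_neg | apply upper_approx_neg]; auto.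
Qed.

End Derivations.

Lemma deduction G (HG : forall P, G P -> wf P) X Y : wf X ->
  LGI_prf tn (fun P => G P \/ P = X) Y -> LGI_prf tn G (FImp X Y).
Proof.
  intro HX.
  assert (HG' : forall P, G P \/ P = X -> wf P) by (intros P [H|H]; [auto|subst; auto]).
  induction 1 as [P HA|P [HP|HP]|P Q HP IHP HPQ IHPQ].
  - pose proof (axiom_wf P HA).
    assert (HK : LGI_prf tn G (FImp P (FImp X P))) by prove_tautology.
    exact (prf_mp _ _ _ _ (prf_ax _ _ _ HA) HK).
  - pose proof (HG P HP).
    assert (HK : LGI_prf tn G (FImp P (FImp X P))) by prove_tautology.
    exact (prf_mp _ _ _ _ (prf_hyp _ _ _ HP) HK).
  - subst. prove_tautology.
  - pose proof (prf_wf _ HG' _ HPQ) as W. unfold FImp in W; simpl in W.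
    assert (HS : LGI_prf tn G (FImp (FImp X P) (FImp (FImp X (FImp P Q)) (FImp X Q))))
      by prove_tautology.
    exact (prf_mp _ _ _ _ IHPQ (prf_mp _ _ _ _ IHP HS)).
Qed.

Lemma consistent_add_neg G (HG : forall P, G P -> wf P) Z : wf Z ->
  ~ LGI_prf tn G Z -> consistent (fun P => G P \/ P = FNot Z).
Proof.
  intros HZ HnZ Hinc. apply HnZ.
  pose proof (deduction G HG (FNot Z) falsum HZ Hinc) as Hd.
  assert (Hnf : LGI_prf tn G (FNot falsum)) by (apply prf_ax, ax_inkons; grade_arith).
  assert (HS : LGI_prf tn G (FImp (FImp (FNot Z) falsum) (FImp (FNot falsum) Z)))
    by (unfold falsum; prove_tautology).
  exact (prf_mp _ _ _ _ Hnf (prf_mp _ _ _ _ Hd HS)).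
Qed.

Definition extend (G : formula -> Prop) (L : list formula) : formula -> Prop :=
  fun P => G P \/ In P L.

Lemma consistent_extend G L (HG : forall P, extend G L P -> wf P) A : wf A ->
  consistent (extend G L) -> consistent (extend G (A :: L)) \/ consistent (extend G (FNot A :: L)).
Proof.
  intros HA Hcons. apply NNPP; intro Hn. apply Hcons.
  assert (Hsub : forall B P, extend G (B :: L) P -> extend G L P \/ P = B)
    by (intros B P [H|[H|H]]; unfold extend; auto).
  assert (Hpos : LGI_prf tn (extend G L) (FImp A falsum)).
  { apply deduction; auto. apply (prf_mono _ _ (Hsub A)), NNPP. tauto. }
  assert (Hneg : LGI_prf tn (extend G L) (FImp (FNot A) falsum)).
  { apply deduction; auto. apply (prf_mono _ _ (Hsub (FNot A))), NNPP. tauto. }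
  assert (HS : LGI_prf tn (extend G L) (FImp (FImp A falsum) (FImp (FImp (FNot A) falsum) falsum)))
    by (unfold falsum; prove_tautology).
  exact (prf_mp _ _ _ _ Hneg (prf_mp _ _ _ _ Hpos HS)).
Qed.

Section Lindenbaum.

Variable G : formula -> Prop.
Hypothesis HG : forall P, G P -> wf P.
Variable A : nat -> formula.
Hypothesis HA : forall n, wf (A n).

Fixpoint stage (n : nat) : list formula :=
  match n with
  | O => nil
  | S n =>
      if excluded_middle_informative (consistent (extend G (A n :: stage n)))
      then A n :: stage n else FNot (A n) :: stage n
  end.

Lemma stage_wf n P : In P (stage n) -> wf P.
Proof.
  induction n as [|n IH]; simpl; [tauto|].
  destruct excluded_middle_informative; intros [<-|H]; simpl; auto.
Qed.

Lemma stage_consistent : consistent G -> forall n, consistent (extend G (stage n)).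
Proof.
  intros H0 n. induction n as [|n IH]; simpl.
  - intro H. apply H0. revert H. apply prf_mono. intros P [HP|[]]; exact HP.
  - destruct excluded_middle_informative as [Hc|Hc]; [exact Hc|].
    destruct (consistent_extend G (stage n)) with (A := A n) as [H|H]; auto; [|contradiction].
    intros P [HP|HP]; [auto | exact (stage_wf n P HP)].
Qed.

Lemma stage_mono n m : (n <= m)%nat -> forall P, In P (stage n) -> In P (stage m).
Proof.
  induction 1 as [|m _ IH]; auto. intros P HP. simpl.
  destruct excluded_middle_informative; right; auto.
Qed.

Definition lindenbaum : formula -> Prop := fun P => G P \/ exists n, In P (stage n).

Lemma lindenbaum_wf P : lindenbaum P -> wf P.
Proof. intros [HP|[n HP]]; [auto | exact (stage_wf n P HP)]. Qed.

Lemma lindenbaum_compact P : LGI_prf tn lindenbaum P ->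
  exists n, LGI_prf tn (extend G (stage n)) P.
Proof.
  induction 1 as [P HP|P [HP|[n HP]]|P Q _ [n1 IH1] _ [n2 IH2]].
  - exists O. now apply prf_ax.
  - exists O. now apply prf_hyp; left.
  - exists n. now apply prf_hyp; right.
  - exists (Nat.max n1 n2). apply (prf_mp _ _ P).
    + revert IH1; apply prf_mono; intros R [H|H]; [left|right]; auto.
      apply (stage_mono n1); [lia | exact H].
    + revert IH2; apply prf_mono; intros R [H|H]; [left|right]; auto.
      apply (stage_mono n2); [lia | exact H].
Qed.

Lemma lindenbaum_consistent : consistent G -> consistent lindenbaum.
Proof.
  intros H0 H. destruct (lindenbaum_compact _ H) as [n Hn].
  exact (stage_consistent H0 n Hn).
Qed.

Lemma lindenbaum_decides n : lindenbaum (A n) \/ lindenbaum (FNot (A n)).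
Proof.
  assert (H : In (A n) (stage (S n)) \/ In (FNot (A n)) (stage (S n))).
  { simpl. destruct excluded_middle_informative; [left|right]; left; reflexivity. }
  destruct H; [left|right]; right; eauto.
Qed.

End Lindenbaum.

(* The grades [k / (m+1)], capped at 1 so that every atom is well formed. *)
Definition grade (k m : nat) : R := Rmin (INR k / INR (S m)) 1.

Definition grade_atom (i k m : nat) : formula := GI BTop (grade k m) (BVar i).

Lemma grade_unit k m : unit_int (grade k m).
Proof.
  assert (0 <= INR k / INR (S m)).
  { apply Rle_mult_inv_pos; [apply pos_INR | apply lt_0_INR; lia]. }
  unfold grade; grade_arith.
Qed.

Definition enum_grade_atom (n : nat) : formula :=
  let (i, r) := Cantor.of_nat n in let (k, m) := Cantor.of_nat r in grade_atom i k m.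

Lemma enum_grade_atom_surj i k m : exists n, enum_grade_atom n = grade_atom i k m.
Proof.
  exists (Cantor.to_nat (i, Cantor.to_nat (k, m))). unfold enum_grade_atom.
  now rewrite !Cantor.cancel_of_to.
Qed.

Lemma enum_grade_atom_wf n : wf (enum_grade_atom n).
Proof.
  unfold enum_grade_atom. destruct (Cantor.of_nat n) as [i r].
  destruct (Cantor.of_nat r) as [k m]. apply grade_unit.
Qed.

Section CanonicalModel.

Variable G : formula -> Prop.
Hypothesis HG : forall P, G P -> wf P.
Hypothesis Hcons : consistent G.
Hypothesis Hdec : forall i k m, G (grade_atom i k m) \/ G (FNot (grade_atom i k m)).

Definition derivable_lower (i : nat) (x : R) : Prop :=
  0 <= x <= 1 /\ LGI_prf tn G (GI BTop x (BVar i)).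

Lemma derivable_lower_bound i : bound (derivable_lower i).
Proof. exists 1; intros x [Hx _]; lra. Qed.

Lemma derivable_lower_inhabited i : exists x, derivable_lower i x.
Proof. exists 0; split; [lra | apply prf_ax, ax_zero]. Qed.

Definition canonical_val (i : nat) : R :=
  proj1_sig (completeness _ (derivable_lower_bound i) (derivable_lower_inhabited i)).

Lemma canonical_val_lub i : is_lub (derivable_lower i) (canonical_val i).
Proof. exact (proj2_sig (completeness _ (derivable_lower_bound i) (derivable_lower_inhabited i))). Qed.

Lemma canonical_val_unit i : unit_int (canonical_val i).
Proof.
  destruct (canonical_val_lub i) as [Hub Hleast]. split.
  - destruct (derivable_lower_inhabited i) as [x Hx]. apply Hub.
    split; [lra | apply prf_ax, ax_zero].
  - apply Hleast. intros x [Hx _]; lra.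
Qed.

Lemma lower_approx_var i : lower_approx G (BVar i) (canonical_val i).
Proof.
  intros c Hc. destruct (canonical_val_lub i) as [_ Hleast].
  assert (Hx : exists x, derivable_lower i x /\ c < x).
  { apply NNPP; intro Hn. assert (canonical_val i <= c); [|lra].
    apply Hleast. intros x Hx. apply Rnot_lt_le; intro; apply Hn; eauto. }
  destruct Hx as [x [[Hx Hprf] Hcx]].
  apply (prf_weaken _ HG _ _ _ _ Hprf); grade_arith.
Qed.

(* Between [canonical_val i] and [c] lies a grade [q]; the atom [top =>_q phi_i]
   cannot be in [G] (it would push the supremum above [q]), so its negation is,
   and [lin_2] turns that into [phi_i =>_(1-q) bot]. *)
Lemma upper_approx_var i : upper_approx G (BVar i) (canonical_val i).
Proof.
  intros c Hc. pose proof (canonical_val_unit i) as Hv.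
  destruct (Rle_lt_dec c 1) as [Hc1|Hc1].
  2: { apply (prf_weaken _ HG _ _ _ _ (prf_ax tn G _ (ax_zero tn (BVar i) BBot))); grade_arith. }
  destruct (grade_density (canonical_val i) c) as [k [m Hq]]; try grade_arith.
  assert (Hgrade : grade k m = INR k / INR (S m)) by (unfold grade; grade_arith).
  destruct (Hdec i k m) as [Hin|Hnin].
  - exfalso. destruct (canonical_val_lub i) as [Hub _].
    assert (grade k m <= canonical_val i); [|lra].
    apply Hub. split; [exact (grade_unit k m) | exact (prf_hyp _ _ _ Hin)].
  - pose proof (prf_ax tn G _ (ax_lin2 tn (BVar i) _ (grade_unit k m))) as Hlin.
    pose proof (prf_or_elim _ HG _ _ Hlin (prf_hyp _ _ _ Hnin)) as H.
    apply (prf_weaken _ HG _ _ _ _ H); grade_arith.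
Qed.

Definition canonical_eval : bexpr -> R := ev canonical_val.

Lemma canonical_approx a :
  lower_approx G a (canonical_eval a) /\ upper_approx G a (canonical_eval a).
Proof.
  exact (approx_ev G HG canonical_val canonical_val_unit lower_approx_var upper_approx_var a).
Qed.

Lemma canonical_sat_prf a c b : LGI_prf tn G (GI a c b) -> sat canonical_eval (GI a c b).
Proof.
  exact (approx_le G HG a c b _ _ Hcons (proj1 (canonical_approx a)) (proj2 (canonical_approx b))).
Qed.

Lemma canonical_prf_of_lt a t b : unit_int t ->
  canonical_eval a < canonical_eval b + 1 - t -> LGI_prf tn G (GI a t b).
Proof.
  intros Ht. exact (prf_of_approx_lt G HG a t b _ _ Ht
    (proj2 (canonical_approx a)) (proj1 (canonical_approx b))).
Qed.

End CanonicalModel.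

End LGI.

Theorem mainTheorem6 (tn : R -> R -> R) (Htn : is_cont_tnorm tn)
  (T : formula -> Prop)
  (HT : forall P, T P -> exists a c b, P = GI a c b /\ unit_int c)
  (zeta eta : bexpr) (e : R) (He : unit_int e) :
  models tn T (GI zeta e eta) ->
  forall t, 0 <= t -> t < e -> LGI_prf tn T (GI zeta t eta).
Proof.
  intros Hmod t Ht0 Hte. apply NNPP; intro Hnot.
  assert (HTwf : forall P, T P -> wf P)
    by (intros P HP; destruct (HT P HP) as (a & c & b & -> & Hc); exact Hc).
  set (Z := GI zeta t eta).
  assert (HZ : wf Z) by (simpl; unfold unit_int in *; lra).
  set (G := fun P => T P \/ P = FNot Z).
  assert (HG : forall P, G P -> wf P) by (intros P [HP| ->]; auto).
  set (M := lindenbaum tn G enum_grade_atom).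
  assert (HM : forall P, M P -> wf P) by exact (lindenbaum_wf tn G HG enum_grade_atom enum_grade_atom_wf).
  assert (HMcons : consistent tn M)
    by exact (lindenbaum_consistent tn Htn G HG enum_grade_atom enum_grade_atom_wf
                (consistent_add_neg tn Htn T HTwf Z HZ Hnot)).
  assert (HMdec : forall i k m, M (grade_atom i k m) \/ M (FNot (grade_atom i k m))).
  { intros i k m. destruct (enum_grade_atom_surj i k m) as [n <-].
    exact (lindenbaum_decides tn G enum_grade_atom n). }
  assert (Hsat : sat (canonical_eval tn M) (GI zeta e eta)).
  { apply Hmod; [exact (ev_is_eval tn Htn _ (canonical_val_unit tn M)) |].
    intros Q HQ. destruct (HT Q HQ) as (a & c & b & -> & _).
    apply (canonical_sat_prf tn Htn M HM HMcons HMdec), prf_hyp. left; left; exact HQ. }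
  apply HMcons, (prf_falsum_of_contra tn Htn M HM Z).
  - apply (canonical_prf_of_lt tn Htn M HM HMdec); cbn [sat] in Hsat; unfold unit_int in *; lra.
  - apply prf_hyp. left; right; reflexivity.
Qed.
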